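(* Let $K$ be a field, $X=\{x_1,\dots,x_n\}$, $H=\langle h_1,\dots,h_r\rangle\subseteq K[X]$, $f\in K[X]$, let $Y=\{x_1,\dots,x_d\}$ be a maximum-size set of independent variables for $H$, let $Z=\{x_{d+1},\dots,x_n\}$ and $H'=HK(Y)[Z]$. Then $f\in\sqrt{H'}$ if and only if $\langle h_1,\dots,h_r,f\cdot t-1\rangle K[Y,Z,t]\cap K[Y]\neq\langle 0\rangle$, where $t$ is a new variable.
   Context: A set $Y=\{x_1,\dots,x_d\}\subseteq X$ is a maximum-size set of independent variables for $H$ if $H\cap K[Y]=\langle 0\rangle$ and for every subset $W\subseteq X$ with more than $d$ elements $H\cap K[W]\neq\langle 0\rangle$. $K(Y)$ is the field of rational functions in $x_1,\dots,x_d$ and $\sqrt{H'}$ is the radical of $H'$ in $K(Y)[Z]$. *)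

From HB Require Import structures.
From mathcomp Require Import all_boot all_algebra.
From mathcomp Require Import fraction.
From mathcomp.multinomials Require Import mpoly.
Set Implicit Arguments. Unset Strict Implicit. Unset Printing Implicit Defensive.
Import GRing.Theory.
Local Open Scope ring_scope.

Definition in_ideal (R : comNzRingType) (r : nat) (g : 'I_r -> R) (p : R) : Prop :=
  exists c : 'I_r -> R, p = \sum_(i < r) c i * g i.

Definition in_radical (R : comNzRingType) (r : nat) (g : 'I_r -> R) (p : R) : Prop :=
  exists k : nat, in_ideal g (p ^+ k).

(* p lies in the subring K[W] of K[x_0..x_{n-1}]: only variables of W occur *)
Definition vars_in (K : fieldType) (n : nat) (W : {set 'I_n}) (p : {mpoly K[n]}) : Prop :=
  forall m, m \in msupp p -> forall i : 'I_n, i \notin W -> m i = 0%N.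

Definition ideal_meets (K : fieldType) (n r : nat) (g : 'I_r -> {mpoly K[n]})
  (W : {set 'I_n}) : Prop :=
  exists2 p : {mpoly K[n]}, p != 0 & in_ideal g p /\ vars_in W p.

Definition max_indep_set (K : fieldType) (n r : nat) (g : 'I_r -> {mpoly K[n]})
  (W : {set 'I_n}) : Prop :=
  ~ ideal_meets g W /\
  forall W' : {set 'I_n}, (#|W| < #|W'|)%N -> ideal_meets g W'.

(* X = {x_0..x_{d+m-1}}, Y = first d variables, Z = last m variables *)
Definition Yset (d m : nat) : {set 'I_(d + m)} := [set i : 'I_(d + m) | (i < d)%N].

Definition KY (K : fieldType) (d : nat) := {fraction {mpoly K[d]}}.

(* the natural map K[X] = K[Y,Z] -> K(Y)[Z] *)
Definition toKYZ (K : fieldType) (d m : nat) (p : {mpoly K[d + m]})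
  : {mpoly (KY K d)[m]} :=
  mmap (fun c : K => (@FracField.tofrac {mpoly K[d]} (c%:MP))%:MP)
       (fun i : 'I_(d + m) => match split i with
                              | inl j => (@FracField.tofrac {mpoly K[d]} ('X_j))%:MP
                              | inr k => 'X_k
                              end) p.

(* the inclusion K[X] -> K[X,t], t being the last variable *)
Definition toKXt (K : fieldType) (n : nat) (p : {mpoly K[n]}) : {mpoly K[n.+1]} :=
  mmap (fun c : K => c%:MP) (fun i : 'I_n => 'X_(widen_ord (leqnSn n) i)) p.

Definition tvar (K : fieldType) (n : nat) : {mpoly K[n.+1]} := 'X_(@ord_max n).

Definition rabino_gens (K : fieldType) (n r : nat) (h : 'I_r -> {mpoly K[n]})
  (f : {mpoly K[n]}) : 'I_r.+1 -> {mpoly K[n.+1]} :=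
  fun i => match unlift ord_max i with
           | Some j => toKXt (h j)
           | None => toKXt f * tvar K n - 1
           end.

Definition Yset_t (d m : nat) : {set 'I_(d + m).+1} := [set i : 'I_(d + m).+1 | (i < d)%N].

From HB Require Import structures.
From mathcomp Require Import all_boot all_algebra.
From mathcomp Require Import fraction ring.
From mathcomp.multinomials Require Import mpoly.
Set Implicit Arguments. Unset Strict Implicit. Unset Printing Implicit Defensive.
Import GRing.Theory.
Local Open Scope ring_scope.

(* Over the field K(Y) this is Rabinowitsch's trick.  If f^k = sum_i c_i h_i in
   K(Y)[Z], a common denominator 0 <> D in K[Y] of the c_i gives D f^k in H, and
   then D = t^k (D f^k) - D (1 - (f t)^k) lies in <H, f t - 1>.  Conversely, if
   0 <> p in K[Y] lies in <H, f t - 1>, substituting t := 1/f into the fraction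
   field of K(Y)[Z] and clearing the powers of f gives f^N p in H K(Y)[Z], where
   p is a unit. *)

Section MpolyMorphism.
Variables (n : nat) (R : comNzRingType).

Lemma mpoly_indCX (P : {mpoly R[n]} -> Prop) :
  (forall c, P c%:MP) -> (forall i, P 'X_i) ->
  (forall p q, P p -> P q -> P (p + q)) ->
  (forall p q, P p -> P q -> P (p * q)) -> forall p, P p.
Proof.
move=> PC PX PD PM p; rewrite (mpolyE p).
elim/big_ind: _ => [|p1 p2|mu _]; [by rewrite -mpolyC0 | exact: PD |].
rewrite -mul_mpolyC mpolyXE_id; apply: (PM) => //.
elim/big_ind: _ => [|p1 p2|i _]; [by rewrite -mpolyC1 | exact: PM |].
elim: (mu i) => [|k IHk]; first by rewrite expr0 -mpolyC1.
by rewrite exprS; apply: (PM).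
Qed.

Lemma mpoly_rmorph_ext (S : nzRingType) (g1 g2 : {rmorphism {mpoly R[n]} -> S}) :
  (forall c, g1 c%:MP = g2 c%:MP) -> (forall i, g1 'X_i = g2 'X_i) -> g1 =1 g2.
Proof.
move=> eqC eqX; elim/mpoly_indCX => // p q E1 E2.
  by rewrite !rmorphD E1 E2.
by rewrite !rmorphM E1 E2.
Qed.

Lemma rmorph_mmap (S T : comNzRingType) (f : R -> S) (h : 'I_n -> S)
    (g : {rmorphism S -> T}) p :
  g (mmap f h p) = mmap (g \o f) (g \o h) p.
Proof.
rewrite rmorph_sum; apply: eq_bigr => mu _; rewrite rmorphM rmorph_prod.
by congr (_ * _); apply: eq_bigr => i _; rewrite rmorphXn.
Qed.

Lemma eq_mmap_on (S : nzRingType) (f1 f2 : R -> S) (h1 h2 : 'I_n -> S)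
    (W : pred 'I_n) p :
  f1 =1 f2 -> {in W, h1 =1 h2} ->
  (forall mu, mu \in msupp p -> forall i, i \notin W -> mu i = 0%N) ->
  mmap f1 h1 p = mmap f2 h2 p.
Proof.
move=> eq_f eq_h suppW; apply: eq_big_seq => mu mu_p; rewrite eq_f.
congr (_ * _); apply: eq_bigr => i _.
by have [/eq_h->|/(suppW _ mu_p)->] := boolP (i \in W); rewrite ?expr0.
Qed.

End MpolyMorphism.

Lemma map_mpoly_inj n (R S : nzRingType) (f : {rmorphism R -> S}) :
  injective f -> injective (@map_mpoly n R S f).
Proof.
move=> inj_f p q /mpolyP eq_pq; apply/mpolyP => mu.
by apply: inj_f; rewrite -!mcoeff_map_mpoly eq_pq.
Qed.

Lemma tofrac_inj (R : idomainType) : injective (@FracField.tofrac R).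
Proof. by move=> x y /eqP; rewrite tofrac_eq => /eqP. Qed.

Section Rename.
Variables (R : comNzRingType) (a b : nat) (tau : 'I_a -> 'I_b).

Definition mrename (p : {mpoly R[a]}) : {mpoly R[b]} :=
  mmap (@mpolyC b R) (fun i => 'X_(tau i)) p.
HB.instance Definition _ :=
  GRing.RMorphism.copy mrename (mmap (@mpolyC b R) (fun i => 'X_(tau i))).

Lemma mrenameC c : mrename c%:MP = c%:MP.
Proof. exact: mmapC. Qed.

Lemma mrenameX i : mrename 'X_i = 'X_(tau i).
Proof. by rewrite /mrename mmapX mmap1U. Qed.

Lemma msupp_mrename p mu : mu \in msupp (mrename p) ->
  forall j, j \notin codom tau -> mu j = 0%N.
Proof.
move=> /msupp_sum_le /flattenP [s /mapP [nu _ ->]].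
rewrite mul_mpolyC => /msuppZ_le.
rewrite /mmap1 mprodXnE msuppX inE => /eqP -> j tau'j.
rewrite mnm_sumE big1 // => i _; rewrite mulmnE mnm1E.
by case: eqP => [eq_ij|]; rewrite ?muln0 //; case/codomP: tau'j; exists i.
Qed.

Hypothesis tau_inj : injective tau.

Definition unrename_var (j : 'I_b) : {mpoly R[a]} :=
  if [pick i | tau i == j] is Some i then 'X_i else 0.

Definition munrename (q : {mpoly R[b]}) : {mpoly R[a]} :=
  mmap (@mpolyC a R) unrename_var q.
HB.instance Definition _ :=
  GRing.RMorphism.copy munrename (mmap (@mpolyC a R) unrename_var).

Lemma unrename_var_tau i : unrename_var (tau i) = 'X_i.
Proof.
rewrite /unrename_var; case: pickP => [i' /eqP/tau_inj -> //|].
by move=> /(_ i); rewrite eqxx.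
Qed.

Lemma mrenameK : cancel mrename munrename.
Proof.
apply: (@mpoly_rmorph_ext _ _ _ (munrename \o mrename) idfun) => [c|i] /=.
  by rewrite mrenameC /munrename mmapC.
by rewrite mrenameX /munrename mmapX mmap1U unrename_var_tau.
Qed.

Lemma munrenameK q :
  (forall mu, mu \in msupp q -> forall j, j \notin codom tau -> mu j = 0%N) ->
  mrename (munrename q) = q.
Proof.
move=> supp_q; rewrite rmorph_mmap -[RHS](comp_mpoly_id q) /comp_mpoly.
apply: (eq_mmap_on (W := mem (codom tau))) => // [c|_ /codomP [i ->]] /=.
  by rewrite mrenameC.
by rewrite tnth_mktuple unrename_var_tau mrenameX.
Qed.

End Rename.

Lemma unlift_max_widen n (i : 'I_n) : unlift ord_max (widen_ord (leqnSn n) i) = Some i.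
Proof.
have -> : widen_ord (leqnSn n) i = lift ord_max i.
  by apply: val_inj; rewrite /= /bump leqNgt ltn_ord.
exact: liftK.
Qed.

Section Ideal.
Variables (R : comNzRingType) (r : nat) (g : 'I_r -> R).

Lemma in_idealMl a p : in_ideal g p -> in_ideal g (a * p).
Proof.
case=> c ->; exists (fun i => a * c i).
by rewrite mulr_sumr; apply: eq_bigr => i _; rewrite mulrA.
Qed.

Lemma in_ideal_rmorph (S : comNzRingType) (phi : {rmorphism R -> S}) p :
  in_ideal g p -> in_ideal (phi \o g) (phi p).
Proof.
case=> c ->; exists (phi \o c).
by rewrite rmorph_sum; apply: eq_bigr => i _; rewrite rmorphM.
Qed.

Lemma in_ideal_rabinowitsch (u t D : R) k :
  in_ideal g (D * u ^+ k) ->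
  in_ideal (fun i => if unlift ord_max i is Some j then g j else u * t - 1) D.
Proof.
case=> c Ec.
(* D = t^k (D u^k) - D (1 - (u t)^k), and 1 - (u t)^k is a multiple of u t - 1. *)
exists (fun i => if unlift ord_max i is Some j then t ^+ k * c j
                 else - D * \sum_(l < k) (u * t) ^+ l).
rewrite big_ord_recr /= unlift_none.
under eq_bigr => i _ do rewrite unlift_max_widen -mulrA.
rewrite -mulr_sumr -Ec -mulrA [_ * (u * t - 1)]mulrC -subrX1 exprMn.
ring.
Qed.

End Ideal.

Lemma in_ideal_clear_denominators (R S : comNzRingType) (phi : {rmorphism R -> S})
    r (g : 'I_r -> R) x (y : 'I_r -> S) (D a : 'I_r -> R) :
  injective phi -> phi x = \sum_i y i * phi (g i) ->
  (forall i, phi (D i) * y i = phi (a i)) -> in_ideal g ((\prod_i D i) * x).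
Proof.
move=> phi_inj Ex Ea; exists (fun i => (\prod_(j | j != i) D j) * a i).
apply: phi_inj; rewrite rmorphM Ex mulr_sumr rmorph_sum; apply: eq_bigr => i _.
by rewrite (bigD1 i) //= !rmorphM -Ea; ring.
Qed.

Lemma rmorph_sum_recr0 (R S : comNzRingType) (phi : {rmorphism R -> S}) r
    (c g : 'I_r.+1 -> R) :
  phi (g ord_max) = 0 ->
  phi (\sum_i c i * g i) =
    \sum_(i < r) phi (c (widen_ord (leqnSn r) i)) * phi (g (widen_ord (leqnSn r) i)).
Proof.
move=> phig0; rewrite big_ord_recr rmorphD rmorphM phig0 mulr0 addr0 rmorph_sum.
by apply: eq_bigr => i _; rewrite rmorphM.
Qed.

Section PowerDenominator.
Variables (R S : comNzRingType) (phi : {rmorphism R -> S}) (u : R).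

Definition pow_denom (y : S) : Prop := exists N a, phi (u ^+ N) * y = phi a.

Lemma pow_denom_rmorph a : pow_denom (phi a).
Proof. by exists 0%N, a; rewrite expr0 rmorph1 mul1r. Qed.

Lemma pow_denomD y z : pow_denom y -> pow_denom z -> pow_denom (y + z).
Proof.
case=> [N1 [a1 E1]] [N2 [a2 E2]]; exists (N1 + N2)%N, (u ^+ N2 * a1 + u ^+ N1 * a2).
by rewrite exprD !rmorphD !rmorphM -E1 -E2; ring.
Qed.

Lemma pow_denomM y z : pow_denom y -> pow_denom z -> pow_denom (y * z).
Proof.
case=> [N1 [a1 E1]] [N2 [a2 E2]]; exists (N1 + N2)%N, (a1 * a2).
by rewrite exprD !rmorphM -E1 -E2; ring.
Qed.

End PowerDenominator.

Section FractionMpoly.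
Variables (R : idomainType) (m : nat).
Local Notation tofrac := (@FracField.tofrac R).

Lemma frac_numden (x : {fraction R}) :
  exists2 b, b != 0 & exists a, x = tofrac a / tofrac b.
Proof.
elim/quotW: x => x; exists (\d_x); first exact: denom_ratioP.
exists (\n_x); apply/(@mulIf _ (tofrac \d_x)); first by rewrite tofrac_eq0 denom_ratioP.
rewrite mulfVK ?tofrac_eq0 ?denom_ratioP // !piE; apply/eqmodP.
rewrite /= FracField.equivfE /FracField.mulf.
rewrite !numden_Ratio ?mulf_neq0 ?oner_neq0 ?denom_ratioP //.
by apply/eqP; rewrite !mulr1 mulrC.
Qed.

Lemma mpoly_frac_clear (q : {mpoly {fraction R}[m]}) :
  exists2 D, D != 0 & exists a, (tofrac D)%:MP * q = map_mpoly tofrac a.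
Proof.
elim/mpoly_indCX: q => [c|i|p q [D1 D1_neq0 [a1 E1]] [D2 D2_neq0 [a2 E2]]
                        |p q [D1 D1_neq0 [a1 E1]] [D2 D2_neq0 [a2 E2]]].
- have [b b_neq0 [a ->]] := frac_numden c.
  exists b => //; exists a%:MP.
  by rewrite map_mpolyC -mpolyCM mulrC divfK // tofrac_eq0.
- exists 1; first exact: oner_neq0.
  by exists 'X_i; rewrite rmorph1 mul1r map_mpolyX.
- exists (D1 * D2); first by rewrite mulf_neq0.
  exists (D2%:MP * a1 + D1%:MP * a2).
  by rewrite rmorphD !rmorphM /= !map_mpolyC -E1 -E2; ring.
- exists (D1 * D2); first by rewrite mulf_neq0.
  exists (a1 * a2).
  by rewrite !rmorphM /= -E1 -E2; ring.
Qed.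

End FractionMpoly.

Lemma split_lshift a b (j : 'I_a) : split (lshift b j) = inl j.
Proof. exact: (unsplitK (inl j)). Qed.

Lemma split_rshift a b (k : 'I_b) : split (rshift a k) = inr k.
Proof. exact: (unsplitK (inr k)). Qed.

Section Rabinowitsch.
Variables (K : fieldType) (d m : nat).
Local Notation n := (d + m)%N.
Local Notation KX := {mpoly K[d + m]}.
Local Notation KYZ := {mpoly (KY K d)[m]}.
Local Notation tofY := (@FracField.tofrac {mpoly K[d]}).
Local Notation embY := (mrename (lshift m)).

HB.instance Definition _ :=
  GRing.RMorphism.copy (@toKXt K n) (@mrename K n n.+1 (widen_ord (leqnSn n))).

Lemma toKXtE (p : KX) : toKXt p = mrename (widen_ord (leqnSn n)) p.
Proof. by []. Qed.

Definition Yvar (j : 'I_d) : 'I_n.+1 := widen_ord (leqnSn n) (lshift m j).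

Lemma Yvar_inj : injective Yvar.
Proof. by move=> j j' /(congr1 val) /= /val_inj. Qed.

Lemma mem_Yset_t i : (i \in Yset_t d m) = (i \in codom Yvar).
Proof.
rewrite inE; apply/idP/codomP => [lt_id|[j ->]]; last by rewrite /= ltn_ord.
by exists (Ordinal lt_id); apply: val_inj.
Qed.

Lemma vars_in_Yset_tP (p : {mpoly K[n.+1]}) :
  vars_in (Yset_t d m) p <-> exists b, p = mrename Yvar b.
Proof.
split=> [Yp|[b ->] mu /msupp_mrename Ymu i]; last by rewrite mem_Yset_t; apply: Ymu.
exists (munrename Yvar p); rewrite munrenameK //; first exact: Yvar_inj.
by move=> mu /Yp Ymu i; rewrite -mem_Yset_t; apply: Ymu.
Qed.

Lemma toKXt_embY (b : {mpoly K[d]}) : toKXt (embY b) = mrename Yvar b.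
Proof.
move: b; apply: (mpoly_rmorph_ext (g1 := @toKXt K n \o embY)) => [c|j] /=.
  by rewrite !mrenameC toKXtE mrenameC.
by rewrite !mrenameX toKXtE mrenameX.
Qed.

Definition toKYZ_coef : K -> KYZ := @mpolyC m _ \o tofY \o @mpolyC d K.

Definition toKYZ_var (i : 'I_n) : KYZ :=
  match split i with inl j => (tofY 'X_j)%:MP | inr k => 'X_k end.

HB.instance Definition _ :=
  GRing.RMorphism.copy (@toKYZ K d m) (mmap toKYZ_coef toKYZ_var).

Lemma toKYZC c : toKYZ c%:MP_[n] = (tofY c%:MP)%:MP.
Proof. exact: (mmapC toKYZ_var toKYZ_coef). Qed.

Lemma toKYZX (i : 'I_n) : toKYZ 'X_i = toKYZ_var i.
Proof. by rewrite -[LHS]/(mmap toKYZ_coef toKYZ_var 'X_i) mmapX mmap1U. Qed.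

Lemma toKYZ_embY (b : {mpoly K[d]}) : toKYZ (embY b) = (tofY b)%:MP.
Proof.
move: b; apply: (mpoly_rmorph_ext (g1 := @toKYZ K d m \o embY)
                                   (g2 := @mpolyC m _ \o tofY)) => [c|j] /=.
  by rewrite mrenameC toKYZC.
by rewrite mrenameX toKYZX /toKYZ_var split_lshift.
Qed.

Definition splitYZ_var (i : 'I_n) : {mpoly {mpoly K[d]}[m]} :=
  match split i with inl j => ('X_j)%:MP | inr k => 'X_k end.

Definition splitYZ (p : KX) : {mpoly {mpoly K[d]}[m]} :=
  mmap (@mpolyC m _ \o @mpolyC d K) splitYZ_var p.
HB.instance Definition _ :=
  GRing.RMorphism.copy splitYZ (mmap (@mpolyC m _ \o @mpolyC d K) splitYZ_var).

Definition joinYZ (q : {mpoly {mpoly K[d]}[m]}) : KX :=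
  mmap embY (fun k => 'X_(rshift d k)) q.
HB.instance Definition _ :=
  GRing.RMorphism.copy joinYZ (mmap embY (fun k => 'X_(rshift d k))).

Lemma splitYZK : cancel splitYZ joinYZ.
Proof.
apply: (mpoly_rmorph_ext (g1 := joinYZ \o splitYZ) (g2 := idfun)) => [c|i] /=.
  by rewrite /splitYZ /joinYZ !mmapC /= mrenameC.
rewrite /splitYZ mmapX mmap1U -[i]splitK /splitYZ_var unsplitK.
case: (split i) => j /=.
  by rewrite /joinYZ mmapC; apply: mrenameX.
by rewrite /joinYZ mmapX mmap1U.
Qed.

Lemma toKYZ_splitYZ (p : KX) : toKYZ p = map_mpoly tofY (splitYZ p).
Proof.
move: p; apply: (mpoly_rmorph_ext (g2 := map_mpoly tofY \o splitYZ)) => [c|i] /=.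
  by rewrite toKYZC /splitYZ mmapC /= map_mpolyC.
rewrite toKYZX /splitYZ mmapX mmap1U /toKYZ_var /splitYZ_var.
by case: (split i) => j; rewrite ?map_mpolyC ?map_mpolyX.
Qed.

Lemma toKYZ_joinYZ (q : {mpoly {mpoly K[d]}[m]}) : toKYZ (joinYZ q) = map_mpoly tofY q.
Proof.
move: q; apply: (mpoly_rmorph_ext (g1 := @toKYZ K d m \o joinYZ)) => [b|k] /=.
  by rewrite /joinYZ mmapC toKYZ_embY map_mpolyC.
by rewrite /joinYZ mmapX mmap1U toKYZX /toKYZ_var split_rshift map_mpolyX.
Qed.

Lemma toKYZ_inj : injective (@toKYZ K d m).
Proof.
move=> p q; rewrite !toKYZ_splitYZ => /(map_mpoly_inj (@tofrac_inj _)).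
exact: (can_inj splitYZK).
Qed.

Lemma rabinowitsch_of_radical r (h : 'I_r -> KX) (f : KX) :
  in_radical (fun i => toKYZ (h i)) (toKYZ f) ->
  ideal_meets (rabino_gens h f) (Yset_t d m).
Proof.
case=> k [c Ef].
have /fin_all_exists2 [D D_neq0 /fin_all_exists [a Ea]] :=
  fun i => mpoly_frac_clear (c i).
have Ea' i : toKYZ (embY (D i)) * c i = toKYZ (joinYZ (a i)).
  by rewrite toKYZ_embY toKYZ_joinYZ.
have Ef' : toKYZ (f ^+ k) = \sum_i c i * toKYZ (h i) by rewrite rmorphXn.
have := in_ideal_clear_denominators toKYZ_inj Ef' Ea'.
rewrite -rmorph_prod => DfH.
have P_neq0 : \prod_i D i != 0 by apply/prodf_neq0 => i _.
exists (mrename Yvar (\prod_i D i)).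
  apply: contra_neq P_neq0 => /(congr1 (munrename Yvar)).
  by rewrite mrenameK ?rmorph0 //; apply: Yvar_inj.
split; last by apply/vars_in_Yset_tP; exists (\prod_i D i).
have := in_ideal_rmorph (@toKXt K n) DfH; rewrite rmorphM rmorphXn /= toKXt_embY.
exact: in_ideal_rabinowitsch.
Qed.

Section InverseSubstitution.
Variables (r : nat) (h : 'I_r -> KX) (f : KX).
Hypothesis f_neq0 : toKYZ f != 0.
Local Notation tofZ := (@FracField.tofrac KYZ).

Definition inv_subst_var (i : 'I_n.+1) : {fraction KYZ} :=
  if unlift ord_max i is Some j then tofZ (toKYZ 'X_j) else (tofZ (toKYZ f))^-1.

Definition inv_subst : {rmorphism {mpoly K[n.+1]} -> {fraction KYZ}} :=
  mmap (tofZ \o @toKYZ K d m \o @mpolyC n K) inv_subst_var.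

Lemma inv_substC c : inv_subst c%:MP = tofZ (toKYZ c%:MP).
Proof. exact: mmapC. Qed.

Lemma inv_substX i : inv_subst 'X_i = inv_subst_var i.
Proof. exact: (etrans (mmapX _ _ _) (mmap1U _ _)). Qed.

Lemma inv_subst_toKXt (p : KX) : inv_subst (toKXt p) = tofZ (toKYZ p).
Proof.
move: p; apply: (mpoly_rmorph_ext (g1 := inv_subst \o @toKXt K n)
                                   (g2 := tofZ \o @toKYZ K d m)) => [c|i] /=.
  by rewrite toKXtE mrenameC inv_substC.
by rewrite toKXtE mrenameX inv_substX /inv_subst_var unlift_max_widen.
Qed.

Lemma inv_subst_tvar : inv_subst (tvar K n) = (tofZ (toKYZ f))^-1.
Proof. by rewrite inv_substX /inv_subst_var unlift_none. Qed.

Lemma rabino_gens_widen i : rabino_gens h f (widen_ord (leqnSn r) i) = toKXt (h i).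
Proof. by rewrite /rabino_gens unlift_max_widen. Qed.

Lemma inv_subst_rabino_gens_max : inv_subst (rabino_gens h f ord_max) = 0.
Proof.
rewrite /rabino_gens unlift_none rmorphB rmorphM rmorph1 inv_subst_toKXt inv_subst_tvar.
by rewrite mulfV ?tofrac_eq0 // subrr.
Qed.

Lemma pow_denom_inv_subst (q : {mpoly K[n.+1]}) :
  pow_denom tofZ (toKYZ f) (inv_subst q).
Proof.
elim/mpoly_indCX: q => [c|i|p q Pp Pq|p q Pp Pq]; last 2 first.
- by rewrite rmorphD; apply: pow_denomD.
- by rewrite rmorphM; apply: pow_denomM.
- by rewrite inv_substC; apply: pow_denom_rmorph.
rewrite inv_substX /inv_subst_var.
case: unliftP => [j _|_]; first exact: pow_denom_rmorph.
by exists 1%N, 1; rewrite expr1 mulfV ?rmorph1 ?tofrac_eq0.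
Qed.

Lemma radical_of_rabinowitsch :
  ideal_meets (rabino_gens h f) (Yset_t d m) ->
  in_radical (fun i => toKYZ (h i)) (toKYZ f).
Proof.
case=> p p_neq0 [[c Ep] /vars_in_Yset_tP [b Epb]].
have b_neq0 : b != 0 by apply: contra_neq p_neq0 => b0; rewrite Epb b0 rmorph0.
have subst_p : tofZ (tofY b)%:MP =
    \sum_(i < r) inv_subst (c (widen_ord (leqnSn r) i)) * tofZ (toKYZ (h i)).
  have -> : tofZ (tofY b)%:MP = inv_subst p.
    by rewrite Epb -toKXt_embY inv_subst_toKXt toKYZ_embY.
  rewrite Ep (rmorph_sum_recr0 _ inv_subst_rabino_gens_max).
  by apply: eq_bigr => i _; rewrite rabino_gens_widen inv_subst_toKXt.
have /fin_all_exists [N /fin_all_exists [a Ea]] :=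
  fun i => pow_denom_inv_subst (c (widen_ord (leqnSn r) i)).
have := in_ideal_clear_denominators (D := fun i => toKYZ f ^+ N i)
                                    (@tofrac_inj _) subst_p Ea.
rewrite prodrXr => /(in_idealMl ((tofY b)^-1)%:MP).
rewrite mulrCA -rmorphM mulVf ?tofrac_eq0 // rmorph1 mulr1.
by exists (\sum_i N i).
Qed.

End InverseSubstitution.
End Rabinowitsch.

Theorem lemma2 (K : fieldType) (d m r : nat)
  (h : 'I_r -> {mpoly K[d + m]}) (f : {mpoly K[d + m]}) :
  max_indep_set h (Yset d m) ->
  (in_radical (fun i => toKYZ (h i)) (toKYZ f) <->
   ideal_meets (rabino_gens h f) (Yset_t d m)).
Proof.
move=> _; split; first exact: rabinowitsch_of_radical.
have [f0 _|f_neq0] := eqVneq (toKYZ f) 0; last exact: radical_of_rabinowitsch.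
by exists 1%N, (fun=> 0); rewrite f0 expr1 big1 // => i _; rewrite mul0r.
Qed.
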